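(* Let $c\in[\frac12,1)$ and let $d,\delta$ be positive integers with $d\ge\delta$. Let $G$ be a graph with maximum degree $\delta$ and $w:V(G)\to[0,1]$ a weight function with $w(V(G))=1$, and assume $G$ has no $d$-bounded $(w,c)$-balanced separator. Fix a bijection $\mathcal{O}:V(G)\to\{1,\dots,|V(G)|\}$ and let $\beta$ be the star-free bag of $G$. Let $F$ be a forcer for $G$. Then $G[\beta]$ is $F$-free.
   Context: For $X\subseteq V(G)$, $w(X)=\sum_{x\in X}w(x)$; $N(X)$ is the set of vertices outside $X$ with a neighbor in $X$, $N[X]=N(X)\cup X$; $N^d[v]$ is the set of vertices at distance at most $d$ from $v$. $X$ is $d$-bounded if $X\subseteq N^d[v]$ for some $v$; $X$ is a $(w,c)$-balanced separator if every connected component $D$ of $G\setminus X$ has $w(D)\le c$. For $v\in V(G)$, the canonical star separation $S_v=(A_v,C_v,B_v)$: $B_v$ is the (under these assumptions unique) largest-weight connected component of $G\setminus N[v]$, $C_v$ consists of $v$ and every vertex of $N(v)$ with a neighbor in $B_v$, and $A_v=V(G)\setminus(B_v\cup C_v)$. Vertices $u,v$ are star twins if $B_u=B_v$, $C_u\setminus\{u\}=C_v\setminus\{v\}$, $A_u\setminus\{v\}=A_v\setminus\{u\}$. The partial order $\le_A$: $x\le_A y$ if $x=y$, or $x,y$ are star twins and $\mathcal{O}(x)<\mathcal{O}(y)$, or $x,y$ are not star twins and $y\in A_x$. Let $X$ be the set of minimal elements of $\le_A$; the star-free bag is $\beta=\bigcap_{x\in X}(B_x\cup C_x)$. For $Y\subseteq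 V(G)$ and $v\in V(G)\setminus Y$, $v$ breaks $Y$ if for every connected component $D$ of $G\setminus N[v]$, $Y\not\subseteq N[D]$. A graph $F$ is a forcer for $G$ if for every $Y\subseteq V(G)$ with $G[Y]$ isomorphic to $F$ there is $v\in Y$ that breaks $Y\setminus\{v\}$. *)

From HB Require Import structures.
From mathcomp Require Import all_boot all_order all_algebra.
Set Implicit Arguments. Unset Strict Implicit. Unset Printing Implicit Defensive.
Import Order.TTheory GRing.Theory Num.Theory.

(* Simple graph G: vertex set a finType T, adjacency e : rel T
   (assumed symmetric and irreflexive in the theorem). *)
Section Graph.
Variables (T : finType) (e : rel T).

Definition nbhd (v : T) : {set T} := [set u | e v u].
Definition nbhdS (X : {set T}) : {set T} :=
  [set u | (u \notin X) && [exists x in X, e x u]].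
Definition cnbhdS (X : {set T}) : {set T} := X :|: nbhdS X.
Definition cnbhd (v : T) : {set T} := cnbhdS [set v].
Fixpoint ball (v : T) (k : nat) : {set T} :=
  match k with 0 => [set v] | k'.+1 => cnbhdS (ball v k') end.

Definition induced_rel (S : {set T}) : rel T :=
  fun a b => [&& a \in S, b \in S & e a b].
Definition is_component (S D : {set T}) : bool :=
  [exists x in S, D == [set y in S | connect (induced_rel S) x y]].

Definition bounded (d : nat) (X : {set T}) : Prop :=
  exists v, X \subset ball v d.

Section Weights.
Variables (R : numDomainType) (w : T -> R).
Local Open Scope ring_scope.
Definition wt (X : {set T}) : R := \sum_(x in X) w x.

Definition balanced_sep (c : R) (X : {set T}) : Prop :=
  forall D, is_component (~: X) D -> wt D <= c.

Definition Bset (v : T) : {set T} :=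
  odflt set0 [pick D | is_component (~: cnbhd v) D &&
                       [forall D', is_component (~: cnbhd v) D' ==> (wt D' <= wt D)]].
Definition Cset (v : T) : {set T} :=
  v |: [set u in nbhd v | [exists b in Bset v, e u b]].
Definition Aset (v : T) : {set T} := ~: (Bset v :|: Cset v).

Definition star_twins (u v : T) : bool :=
  [&& Bset u == Bset v, Cset u :\ u == Cset v :\ v & Aset u :\ v == Aset v :\ u].

Definition leA (O : T -> nat) (x y : T) : bool :=
  [|| x == y, star_twins x y && (O x < O y)%N | ~~ star_twins x y && (y \in Aset x)].

Definition minimalA (O : T -> nat) : {set T} :=
  [set x | [forall y, leA O y x ==> (y == x)]].

Definition star_free_bag (O : T -> nat) : {set T} :=
  \bigcap_(x in minimalA O) (Bset x :|: Cset x).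
End Weights.

Definition breaks (Y : {set T}) (v : T) : bool :=
  (v \notin Y) &&
  [forall D, is_component (~: cnbhd v) D ==> ~~ (Y \subset cnbhdS D)].

Definition induced_copy (TF : finType) (eF : rel TF) (Y : {set T}) : Prop :=
  exists f : TF -> T,
    [/\ injective f, f @: [set: TF] = Y & forall a b, eF a b = e (f a) (f b)].

Definition forcer (TF : finType) (eF : rel TF) : Prop :=
  forall Y, induced_copy eF Y -> exists2 v, v \in Y & breaks (Y :\ v) v.

Definition F_free_in (TF : finType) (eF : rel TF) (S : {set T}) : Prop :=
  ~ exists Y : {set T}, Y \subset S /\ induced_copy eF Y.
End Graph.

From HB Require Import structures.
From mathcomp Require Import all_boot all_order all_algebra.
From mathcomp Require Import lra.
Import Order.TTheory GRing.Theory Num.Theory.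
Local Open Scope ring_scope.
Set Implicit Arguments. Unset Strict Implicit. Unset Printing Implicit Defensive.

(* If G[beta] contained a copy Y of F, the forcer would give v in Y breaking
   Y \ {v}, hence some y in Y outside {v} u N[B_v], i.e. y in A_v.  With no
   d-bounded balanced separator, B_u is a component of G \ N[u] of weight
   > c >= 1/2, so two such components always meet; consequently y in A_x
   implies B_x <= B_y, and A_v only grows when B_v shrinks.  Take a
   <=_A-minimal x with B_x <= B_v.  Since y in beta <= B_x u C_x, y is not in
   A_x, so y = x and B_x = B_v; then v in B_x u C_x with v <> x would lie in
   B_v or have a neighbour in B_v, both impossible. *)

Section Components.
Variables (T : finType) (e : rel T).

Lemma in_cnbhd v z : (z \in cnbhd e v) = (z == v) || e v z.
Proof.
rewrite !inE; case: eqP => //= _.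
apply/existsP/idP => [[x /andP[]]|evz]; first by rewrite inE => /eqP ->.
by exists v; rewrite inE eqxx.
Qed.

Lemma ball_subset v : {homo ball e v : k m / (k <= m)%N >-> k \subset m}.
Proof.
apply: homo_leq => [X|X Y Z|k]; first exact: subxx; last exact: subsetUl.
exact: subset_trans.
Qed.

Lemma cnbhdS_subset (X Y : {set T}) : X \subset Y -> cnbhdS e X \subset cnbhdS e Y.
Proof.
move=> XY; apply/subsetP=> u.
rewrite !inE => /orP[uX|/andP[_ /existsP[x /andP[xX exu]]]].
  by rewrite (subsetP XY).
by case: (u \in Y) => //=; apply/existsP; exists x; rewrite (subsetP XY).
Qed.

Hypothesis e_sym : symmetric e.

Lemma notin_cnbhdS (X : {set T}) y : y \notin cnbhdS e X -> X \subset ~: cnbhd e y.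
Proof.
rewrite !inE negb_or => /andP[yX]; rewrite yX /= => /existsPn no_adj.
apply/subsetP=> x xX; rewrite in_setC in_cnbhd negb_or e_sym.
by rewrite (memPn yX) //=; move: (no_adj x); rewrite xX.
Qed.

Lemma induced_rel_sym S : symmetric (induced_rel e S).
Proof. by move=> a b; rewrite /induced_rel e_sym andbCA. Qed.

Lemma componentP S D : is_component e S D ->
  exists2 r, r \in S & D = [set y in S | connect (induced_rel e S) r y].
Proof. by case/existsP=> r /andP[rS /eqP ->]; exists r. Qed.

Lemma component_sub S D : is_component e S D -> D \subset S.
Proof. by case/componentP=> r _ ->; apply/subsetP=> x; rewrite inE => /andP[]. Qed.

Lemma component_closed S D b z :
  is_component e S D -> b \in D -> z \in S -> e b z -> z \in D.
Proof.
case/componentP=> r _ ->; rewrite !inE => /andP[bS rb] zS ebz.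
by rewrite zS (connect_trans rb) // connect1 // /induced_rel bS zS.
Qed.

Lemma component_eq S D1 D2 z : is_component e S D1 -> is_component e S D2 ->
  z \in D1 -> z \in D2 -> D1 = D2.
Proof.
case/componentP=> r1 _ ->; case/componentP=> r2 _ ->.
rewrite !inE => /andP[_ r1z] /andP[_ r2z].
set E := induced_rel e S; have conn_sym := sym_connect_sym (induced_rel_sym S).
have r21 : connect E r2 r1 by rewrite (connect_trans r2z) // conn_sym.
have r12 : connect E r1 r2 by rewrite (connect_trans r1z) // conn_sym.
apply/setP=> y; rewrite !inE; congr (_ && _).
by apply/idP/idP; [exact: connect_trans r21 | exact: connect_trans r12].
Qed.

Lemma component_sub_component (S S' D : {set T}) :
  is_component e S D -> D \subset S' ->
  exists2 D', is_component e S' D' & D \subset D'.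
Proof.
move=> cD DS'; case/componentP: (cD) => r rS defD.
have rD : r \in D by rewrite defD inE rS connect0.
exists [set y in S' | connect (induced_rel e S') r y].
  by apply/existsP; exists r; rewrite (subsetP DS') ?eqxx.
apply/subsetP=> z zD; rewrite inE (subsetP DS') //=.
move: zD; rewrite {1}defD inE => /andP[_ /connectP[p + ->]].
elim: p r rD {rS defD} => [|b p IH] a aD /=; first by rewrite connect0.
case/andP=> /and3P[aS bS eab] pth.
have bD : b \in D by apply: component_closed cD aD bS eab.
apply: connect_trans (IH b bD pth).
by rewrite connect1 // /induced_rel !(subsetP DS').
Qed.

End Components.

Section Weights.
Variables (R : numDomainType) (T : finType) (w : T -> R).

Lemma wt_setU_disjoint (A B : {set T}) :
  [disjoint A & B] -> wt w (A :|: B) = wt w A + wt w B.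
Proof. by move=> dAB; rewrite /wt -bigU //; apply: eq_bigl => x; rewrite !inE. Qed.

Lemma wt_subset (A B : {set T}) :
  (forall v, 0 <= w v) -> A \subset B -> wt w A <= wt w B.
Proof.
move=> w_ge0 AB; rewrite /wt [X in _ <= X](big_setID A) /= (setIidPr AB) lerDl.
exact: sumr_ge0.
Qed.

End Weights.

Section StarSeparation.
Variables (R : realFieldType) (T : finType) (e : rel T) (w : T -> R).
Variables (c : R) (d : nat).
Hypotheses (e_sym : symmetric e) (c_ge_half : 2^-1 <= c) (d_gt0 : (0 < d)%N).
Hypotheses (w_ge0 : forall v, 0 <= w v) (wT : wt w [set: T] = 1).
Hypothesis no_sep : ~ (exists X : {set T}, bounded e d X /\ balanced_sep e w c X).

Local Notation A := (Aset e w).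
Local Notation B := (Bset e w).
Local Notation C := (Cset e w).

(* Unifying [B x] with [B y] for distinct [x], [y] unfolds the [pick] over
   [{set T}] and does not terminate in practice, so the proofs below avoid
   rewrites and [done] calls that would attempt it. *)

Lemma heavy_sets_meet (X Y : {set T}) :
  c < wt w X -> c < wt w Y -> ~~ [disjoint X & Y].
Proof.
move=> cX cY; apply/negP=> dXY.
have := wt_subset w_ge0 (subsetT (X :|: Y)).
rewrite wT wt_setU_disjoint //; have := c_ge_half; lra.
Qed.

Lemma exists_heavy_component v :
  exists2 D, is_component e (~: cnbhd e v) D & c < wt w D.
Proof.
have [/existsP[D /andP[cD heavyD]]|/existsPn no_heavy] :=
  boolP [exists D, is_component e (~: cnbhd e v) D && (c < wt w D)].
  by exists D.
case: no_sep; exists (cnbhd e v); split.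
  by exists v; apply: (ball_subset e v d_gt0).
by move=> D cD; move: (no_heavy D); rewrite cD -leNgt.
Qed.

Lemma BsetP v : is_component e (~: cnbhd e v) (B v) /\ c < wt w (B v).
Proof.
have [D0 cD0 heavyD0] := exists_heavy_component v.
have [D cD maxD] := arg_maxP (wt w) cD0.
rewrite /Bset; case: pickP => [D' /andP[cD' /forallP maxD']|/(_ D)].
  by split=> //; apply: lt_le_trans heavyD0 _; move/implyP: (maxD' D0); apply.
by rewrite cD; move/forallP; case=> D''; apply/implyP; apply: maxD.
Qed.

Lemma Bset_nonadj v b : b \in B v -> (b != v) && ~~ e v b.
Proof.
have [cB _] := BsetP v.
by move/(subsetP (component_sub cB)); rewrite inE in_cnbhd negb_or.
Qed.

Lemma adj_Bset v z b : z \notin B v -> z != v -> e z b -> b \in B v -> e v z.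
Proof.
move=> zB zv ezb bB; apply: contraNT zB => nevz.
have [cB _] := BsetP v.
apply: component_closed cB bB _ _; last by rewrite e_sym.
by rewrite inE in_cnbhd negb_or zv.
Qed.

Lemma CsetD1E v : C v :\ v = nbhdS e (B v).
Proof.
apply/setP=> z; rewrite !inE.
have -> : [exists b in B v, e b z] = [exists b in B v, e z b].
  by apply: eq_existsb => b; rewrite e_sym.
case: (z =P v) => [->|/eqP zv] /=.
  apply/esym/negbTE; rewrite negb_and negbK; apply/orP; right.
  by apply/existsPn=> b; apply/andP=> -[/Bset_nonadj/andP[_ /negP]].
case: existsP => [[b /andP[bB ezb]]|_]; last by rewrite !andbF.
rewrite !andbT; apply/idP/idP => [evz|zB]; last exact: adj_Bset zB zv ezb bB.
by apply/negP => /Bset_nonadj/andP[_]; rewrite evz.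
Qed.

Lemma AsetE v : A v = ~: (v |: cnbhdS e (B v)).
Proof.
have vC : v \in C v by apply: setU11.
by rewrite /Aset -(setD1K vC) CsetD1E /cnbhdS setUCA.
Qed.

Lemma Aset_Bset_subset x y : y \in A x -> B x \subset B y.
Proof.
rewrite AsetE in_setC in_setU1 negb_or.
case/andP=> _ /(notin_cnbhdS e_sym) Bx_far_y.
have [cBx heavyBx] := BsetP x; have [cBy heavyBy] := BsetP y.
have [D cD BxD] := component_sub_component cBx Bx_far_y.
have heavyD : c < wt w D := lt_le_trans heavyBx (wt_subset w_ge0 BxD).
have /pred0Pn[z /andP[zBy zD]] := heavy_sets_meet heavyBy heavyD.
by rewrite (component_eq e_sym cBy cD zBy zD).
Qed.

Lemma Aset_antimono x v z : B x \subset B v -> z \in A v -> z != x -> z \in A x.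
Proof.
move=> BxBv zAv zx; rewrite AsetE in_setC in_setU1 negb_or in zAv.
rewrite AsetE in_setC in_setU1 negb_or zx; case/andP: zAv => _.
apply: contra; apply: subsetP.
exact: cnbhdS_subset.
Qed.

Lemma star_twins_Bset x y : B x = B y -> star_twins e w x y.
Proof.
move=> BxBy; apply/and3P; split; apply/eqP; first exact: BxBy.
  by rewrite [LHS]CsetD1E [RHS]CsetD1E BxBy.
rewrite [in X in X = _]AsetE [in X in _ = X]AsetE BxBy.
by apply/setP=> z; rewrite !in_setD1 !in_setC !in_setU1 !negb_or andbCA.
Qed.

Lemma breaks_Aset Y v : breaks e Y v -> exists2 y, y \in Y & y \in A v.
Proof.
have [cB _] := BsetP v.
rewrite /breaks => /andP[vY /forallP/(_ (B v))].
rewrite cB => /subsetPn[y yY yN].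
exists y; rewrite // AsetE in_setC in_setU1 negb_or yN andbT.
by apply: contraNneq vY => <-.
Qed.

Variable O : T -> nat.

Lemma leA_Bset y x : leA e w O y x -> y != x ->
  B y \proper B x \/ B y = B x /\ (O y < O x)%N.
Proof.
rewrite /leA => /or3P[/eqP-> | /andP[twins Oyx] | /andP[not_twins xA]] yx.
- by rewrite eqxx in yx.
- by case/and3P: twins => /eqP ByBx _ _; right; split.
left; rewrite properEneq (Aset_Bset_subset xA) andbT.
by apply: contra not_twins => /eqP; apply: star_twins_Bset.
Qed.

Lemma exists_minimalA v : exists2 x, x \in minimalA e w O & B x \subset B v.
Proof.
(* Minimising [#|B u|] and then [O u] refines the order [leA]. *)
have [x0 Bx0v min_x0] :=
  @arg_minnP _ v (fun u => B u \subset B v) (fun u => #|B u|) (subxx _).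
have [x /eqP Bx minO] := @arg_minnP _ x0 (fun u => B u == B x0) O (eqxx _).
exists x; last by rewrite Bx.
rewrite inE; apply/forallP=> y; apply/implyP=> yx_le; apply/contraT=> yx.
have [ByBx | [ByBx Oyx]] := leA_Bset yx_le yx.
  have ByBv : B y \subset B v by rewrite (subset_trans (proper_sub ByBx)) ?Bx.
  by have := min_x0 y ByBv; rewrite -Bx leqNgt (proper_card ByBx).
have ByBx0 : B y == B x0 by rewrite ByBx Bx.
by have := minO y ByBx0; rewrite leqNgt Oyx.
Qed.

Lemma star_free_bag_notin_Aset v y :
  v \in star_free_bag e w O -> y \in star_free_bag e w O -> y \notin A v.
Proof.
move=> v_bag y_bag; apply/negP=> yAv.
have yv : y != v.
  by move: yAv; rewrite AsetE in_setC in_setU1 negb_or => /andP[].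
have [x xmin BxBv] := exists_minimalA v.
have bag_x : star_free_bag e w O \subset B x :|: C x := bigcap_inf _ xmin.
have yx : y = x.
  apply/eqP; apply: contraT => yx; have := Aset_antimono BxBv yAv yx.
  by rewrite /Aset in_setC (subsetP bag_x).
subst x; have ByBv : B y = B v.
  apply/eqP; rewrite eqEsubset; apply/andP.
  by split; [exact: BxBv | exact: Aset_Bset_subset yAv].
move: (subsetP bag_x v v_bag); rewrite in_setU => /orP[vB | vC].
  by rewrite ByBv in vB; case/Bset_nonadj/andP: vB; rewrite eqxx.
have: v \in C y :\ y by rewrite in_setD1 vC andbT eq_sym.
rewrite CsetD1E ByBv inE => /andP[_ /existsP[b /andP[bB ebv]]].
by case/Bset_nonadj/andP: bB => _; rewrite e_sym ebv.
Qed.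

End StarSeparation.

Theorem lemma4p10 (R : realFieldType) (T : finType) (e : rel T) (w : T -> R)
    (c : R) (d delta : nat) (O : T -> nat) (TF : finType) (eF : rel TF) :
  symmetric e -> irreflexive e ->
  2^-1 <= c -> c < 1 ->
  (0 < delta)%N -> (delta <= d)%N ->
  \max_(v : T) #|nbhd e v| = delta ->
  (forall v, 0 <= w v <= 1) -> wt w [set: T] = 1 ->
  ~ (exists X : {set T}, bounded e d X /\ balanced_sep e w c X) ->
  injective O -> (forall v, 1 <= O v <= #|T|)%N ->
  symmetric eF -> irreflexive eF ->
  forcer e eF ->
  F_free_in e eF (star_free_bag e w O).
Proof.
move=> e_sym _ c_ge_half _ delta_gt0 delta_le_d _ w01 wT no_sep _ _ _ _ forcerF.
have d_gt0 : (0 < d)%N := leq_trans delta_gt0 delta_le_d.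
have w_ge0 v : 0 <= w v by case/andP: (w01 v).
move=> [Y [Y_bag copyY]]; have [v vY v_breaks] := forcerF Y copyY.
have [y /setD1P[_ yY] yAv] := breaks_Aset e_sym d_gt0 no_sep v_breaks.
have Bag := subsetP Y_bag.
exact: negP (star_free_bag_notin_Aset e_sym c_ge_half d_gt0 w_ge0 wT no_sep
  (Bag v vY) (Bag y yY)) yAv.
Qed.
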